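(* For every $g\in\mathrm{Sp}(2,1)$, the set of traces of the elements of $g\,\mathrm{SU}(2,1)\,g^{-1}$ is not contained in $\mathbb R$.
   Context: $\mathbb H$ denotes the quaternions. $\mathrm{Sp}(2,1)=\{A\in\mathrm{GL}(3,\mathbb H): A^*I_{2,1}A=I_{2,1}\}$ with $A^*$ the conjugate transpose and $I_{2,1}=\mathrm{diag}(1,1,-1)$. $\mathrm{SU}(2,1)\subset\mathrm{Sp}(2,1)$ is the subgroup of complex matrices of determinant $1$ preserving $I_{2,1}$. The trace of a quaternionic matrix is the sum of its diagonal entries. *)

From HB Require Import structures.
From mathcomp Require Import all_boot all_order all_algebra.
From mathcomp Require Import complex.
From mathcomp Require Import reals.
Set Implicit Arguments. Unset Strict Implicit. Unset Printing Implicit Defensive.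
Import Order.TTheory GRing.Theory Num.Theory.
Local Open Scope ring_scope.

Record quat (R : Type) := Quat { qre : R; qi : R; qj : R; qk : R }.

Section Quat.
Variable R : realType.

Definition qzero : quat R := Quat 0 0 0 0.
Definition qone : quat R := Quat 1 0 0 0.
Definition qadd (p q : quat R) : quat R :=
  Quat (qre p + qre q) (qi p + qi q) (qj p + qj q) (qk p + qk q).
(* Hamilton product, i^2 = j^2 = k^2 = ijk = -1 *)
Definition qmul (p q : quat R) : quat R :=
  Quat (qre p * qre q - qi p * qi q - qj p * qj q - qk p * qk q)
       (qre p * qi q + qi p * qre q + qj p * qk q - qk p * qj q)
       (qre p * qj q - qi p * qk q + qj p * qre q + qk p * qi q)
       (qre p * qk q + qi p * qj q - qj p * qi q + qk p * qre q).
Definition qconj (p : quat R) : quat R := Quat (qre p) (- qi p) (- qj p) (- qk p).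
Definition qreal (p : quat R) : Prop := qi p = 0 /\ qj p = 0 /\ qk p = 0.
Definition quat_of_complex (z : R[i]) : quat R := Quat (complex.Re z) (complex.Im z) 0 0.

Definition qmat := 'I_3 -> 'I_3 -> quat R.

Definition qmx_eq (A B : qmat) : Prop := forall i j, A i j = B i j.
Definition qmxmul (A B : qmat) : qmat := fun i j =>
  foldr (fun k acc => qadd (qmul (A i k) (B k j)) acc) qzero (enum 'I_3).
Definition qmx1 : qmat := fun i j => if i == j then qone else qzero.
Definition qmx_adj (A : qmat) : qmat := fun i j => qconj (A j i).
Definition qI21 : qmat := fun i j =>
  if i == j then (if val i == 2%N then Quat (-1) 0 0 0 else qone) else qzero.
Definition qtrace (A : qmat) : quat R :=
  foldr (fun k acc => qadd (A k k) acc) qzero (enum 'I_3).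

Definition qGL3 (A : qmat) : Prop :=
  exists B : qmat, qmx_eq (qmxmul A B) qmx1 /\ qmx_eq (qmxmul B A) qmx1.

Definition Sp21 (A : qmat) : Prop :=
  qGL3 A /\ qmx_eq (qmxmul (qmx_adj A) (qmxmul qI21 A)) qI21.

Definition cI21 : 'M[R[i]]_3 := diag_mx (\row_(k < 3) (if val k == 2%N then -1 else 1)).

Definition SU21 (M : 'M[R[i]]_3) : Prop :=
  \det M = 1 /\ (map_mx (@conjc R) M)^T *m cI21 *m M = cI21.

Definition qmat_of_cmx (M : 'M[R[i]]_3) : qmat := fun i j => quat_of_complex (M i j).

Definition SU21_in_Sp21 (A : qmat) : Prop :=
  exists M : 'M[R[i]]_3, SU21 M /\ qmx_eq A (qmat_of_cmx M).

Definition qconj_set (g : qmat) (H : qmat -> Prop) (A : qmat) : Prop :=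
  exists h ginv, H h /\ qmx_eq (qmxmul g ginv) qmx1 /\ qmx_eq (qmxmul ginv g) qmx1
                 /\ qmx_eq A (qmxmul g (qmxmul h ginv)).

End Quat.

(* Put L = I_{2,1} g^* I_{2,1}, the inverse of g.  For a complex matrix X,
   tr (g X L) = sum_{k,l} (Re X_kl S_kl + Im X_kl T_kl), where
   S_kl = sum_m g_mk L_lm and T_kl = sum_m g_mk i L_lm; the order of the
   factors matters since H is not commutative.  The real parts of S and T are
   read off L g = 1, and S, T are (anti-)hermitian for the form I_{2,1}.  So if
   all these traces were real, evaluating them at seven explicit elements of
   SU(2,1) would force S = 1 and T_0l = 0 for every l.  As quaternionic matrix
   products, S = g^T L^T and (T_0l)_l = (g_m0 i)_m L^T.  A one-sided inverse of
   a quaternionic matrix is two-sided, so L^T g^T = 1 too, and then g_m0 i = 0: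
   the first column of the invertible matrix g vanishes. *)

From HB Require Import structures.
From mathcomp Require Import all_boot all_order all_algebra.
From mathcomp Require Import complex reals.
From mathcomp Require Import ring lra.
Set Implicit Arguments. Unset Strict Implicit. Unset Printing Implicit Defensive.
Import Order.TTheory GRing.Theory Num.Theory.
Local Open Scope ring_scope.

Lemma lin_can_sym (K : fieldType) (m n : nat)
    (f h : {linear 'M[K]_(m, n) -> 'M[K]_(m, n)}) :
  cancel f h -> cancel h f.
Proof.
move=> fK.
have fh1 : lin_mx f *m lin_mx h = 1%:M.
  apply/row_matrixP => i; rewrite !rowE mulmx1 mulmxA.
  by rewrite -[delta_mx 0 i]vec_mxK !mul_vec_lin fK.
move=> u; apply: (can_inj mxvecK).
by rewrite -(mul_vec_lin f) -(mul_vec_lin h) -mulmxA (mulmx1C fh1) mulmx1.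
Qed.

Lemma quatP (R : realType) (p q : quat R) :
  qre p = qre q -> qi p = qi q -> qj p = qj q -> qk p = qk q -> p = q.
Proof. by case: p q => a b c d [e f g h] /= -> -> -> ->. Qed.

Lemma quat_eqE (R : realType) (p q : quat R) :
  p = q -> [/\ qre p = qre q, qi p = qi q, qj p = qj q & qk p = qk q].
Proof. by move->. Qed.

Definition qscale (R : realType) (r : R) (q : quat R) : quat R :=
  Quat (r * qre q) (r * qi q) (r * qj q) (r * qk q).
Definition qunit_i {R : realType} : quat R := Quat 0 1 0 0.

Ltac quat_ring :=
  apply: quatP; cbn [qre qi qj qk qadd qmul qconj qscale qunit_i qzero qone]; ring.

Definition o0 : 'I_3 := @Ordinal 3 0 isT.
Definition o1 : 'I_3 := @Ordinal 3 1 isT.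
Definition o2 : 'I_3 := @Ordinal 3 2 isT.

Lemma ord3E (i : 'I_3) : [\/ i = o0, i = o1 | i = o2].
Proof.
case: i => [[|[|[|n]]] lt_i3]; [constructor 1|constructor 2|constructor 3|by []];
  exact: val_inj.
Qed.

Lemma enum_ord3 : enum 'I_3 = [:: o0; o1; o2].
Proof. by apply: (inj_map val_inj); rewrite val_enum_ord. Qed.

Section Quaternions.
Variable R : realType.
Local Notation quat := (quat R).
Local Notation qmat := (qmat R).

Lemma qmul_i_eq0 (q : quat) : qmul q qunit_i = qzero R -> q = qzero R.
Proof.
move=> /quat_eqE[]; cbn [qre qi qj qk qmul qunit_i qzero] => e0 e1 e2 e3.
apply: quatP; cbn [qre qi qj qk qzero]; lra.
Qed.

Definition qsum3 (F : 'I_3 -> quat) : quat := qadd (F o0) (qadd (F o1) (F o2)).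

Lemma qsum3_eq (F G : 'I_3 -> quat) : F =1 G -> qsum3 F = qsum3 G.
Proof. by move=> eFG; rewrite /qsum3 !eFG. Qed.

Lemma qmxmulE (A B : qmat) i j : qmxmul A B i j = qsum3 (fun k => qmul (A i k) (B k j)).
Proof. by rewrite /qmxmul enum_ord3 /=; congr qadd; congr qadd; quat_ring. Qed.

Lemma qtraceE (A : qmat) : qtrace A = qsum3 (fun k => A k k).
Proof. by rewrite /qtrace enum_ord3 /=; congr qadd; congr qadd; quat_ring. Qed.

Definition qvec_mulmx (P : qmat) (v : 'I_3 -> quat) (l : 'I_3) : quat :=
  qsum3 (fun m => qmul (v m) (P m l)).

Lemma qvec_mulmx_eq (P Q : qmat) (v w : 'I_3 -> quat) :
  qmx_eq P Q -> v =1 w -> qvec_mulmx P v =1 qvec_mulmx Q w.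
Proof. by move=> ePQ evw l; apply: qsum3_eq => m; rewrite ePQ evw. Qed.

Lemma qvec_mulmxA (A B : qmat) v :
  qvec_mulmx B (qvec_mulmx A v) =1 qvec_mulmx (qmxmul A B) v.
Proof. by move=> l; rewrite /qvec_mulmx /qsum3 !qmxmulE /qsum3; quat_ring. Qed.

Lemma qvec_mulmx1 v : qvec_mulmx (qmx1 R) v =1 v.
Proof.
by move=> l; rewrite /qvec_mulmx /qsum3 /qmx1; case: (ord3E l) => -> /=; quat_ring.
Qed.

Lemma qvec_mulmx_row1 (P : qmat) k : qvec_mulmx P (qmx1 R k) =1 P k.
Proof.
by move=> l; rewrite /qvec_mulmx /qsum3 /qmx1; case: (ord3E k) => -> /=; quat_ring.
Qed.

End Quaternions.

Section RealRepresentation.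
Variable R : realType.
Local Notation quat := (quat R).
Local Notation qmat := (qmat R).

Definition mx_of_qvec (v : 'I_3 -> quat) : 'M[R]_(3, 4) :=
  \matrix_(m, c) nth 0 [:: qre (v m); qi (v m); qj (v m); qk (v m)] c.
Definition qvec_of_mx (u : 'M[R]_(3, 4)) (m : 'I_3) : quat :=
  Quat (u m (inord 0)) (u m (inord 1)) (u m (inord 2)) (u m (inord 3)).

Lemma mx_of_qvecK v : qvec_of_mx (mx_of_qvec v) =1 v.
Proof. by move=> m; rewrite /qvec_of_mx !mxE !inordK //; case: (v m). Qed.

Lemma qvec_of_mx_inj (u w : 'M[R]_(3, 4)) : qvec_of_mx u =1 qvec_of_mx w -> u = w.
Proof.
move=> euw; apply/matrixP => m c; have [e0 e1 e2 e3] := quat_eqE (euw m).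
have -> : c = inord c by apply: val_inj; rewrite /= inordK.
by case: c => [[|[|[|[|c]]]] lt_c4].
Qed.

Definition qvec_mulmx_rep (P : qmat) (u : 'M[R]_(3, 4)) : 'M[R]_(3, 4) :=
  mx_of_qvec (qvec_mulmx P (qvec_of_mx u)).

Lemma qvec_mulmx_repE P u :
  qvec_of_mx (qvec_mulmx_rep P u) =1 qvec_mulmx P (qvec_of_mx u).
Proof. exact: mx_of_qvecK. Qed.

Lemma qvec_mulmx_rep_is_linear P : linear (qvec_mulmx_rep P).
Proof.
move=> a u w; apply/matrixP => l c; rewrite !mxE /qvec_mulmx /qsum3 /qvec_of_mx !mxE.
by case: c => [[|[|[|[|c]]]] lt_c4] //=; ring.
Qed.

HB.instance Definition _ P :=
  GRing.isLinear.Build R _ _ _ (qvec_mulmx_rep P) (qvec_mulmx_rep_is_linear P).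

(* Right multiplication by a quaternionic matrix is R-linear on H^3 = R^(3x4),
   where a one-sided inverse of a linear endomorphism is two-sided. *)
Lemma qmx_mul1C (A B : qmat) :
  qmx_eq (qmxmul A B) (qmx1 R) -> qmx_eq (qmxmul B A) (qmx1 R).
Proof.
move=> AB1.
have repK : cancel (qvec_mulmx_rep A) (qvec_mulmx_rep B).
  move=> u; apply: qvec_of_mx_inj => l.
  rewrite qvec_mulmx_repE (qvec_mulmx_eq (fun _ _ => erefl) (qvec_mulmx_repE A u)).
  rewrite qvec_mulmxA.
  by rewrite (qvec_mulmx_eq AB1 (frefl _)) qvec_mulmx1.
move=> k l; pose u := mx_of_qvec (qmx1 R k).
transitivity (qvec_mulmx A (qvec_mulmx B (qmx1 R k)) l).
  by rewrite qvec_mulmxA qvec_mulmx_row1.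
transitivity (qvec_of_mx (qvec_mulmx_rep A (qvec_mulmx_rep B u)) l); last first.
  by rewrite (lin_can_sym repK) mx_of_qvecK.
rewrite qvec_mulmx_repE; apply: qvec_mulmx_eq => [//|m].
by rewrite qvec_mulmx_repE; apply: qvec_mulmx_eq => [//|n]; rewrite mx_of_qvecK.
Qed.

End RealRepresentation.

Section SpInverse.
Variable R : realType.
Local Notation qmat := (qmat R).

Definition eps21 (k : 'I_3) : R := if val k == 2%N then -1 else 1.

Lemma eps21_sq k : eps21 k * eps21 k = 1 :> R.
Proof. by rewrite /eps21; case: eqP => _; rewrite ?mulrNN mulr1. Qed.

Definition sp_inv (g : qmat) : qmat :=
  fun l m => qscale (eps21 l * eps21 m) (qconj (g m l)).

Variable g : qmat.
Hypothesis g_sp : qmx_eq (qmxmul (qmx_adj g) (qmxmul (qI21 R) g)) (qI21 R).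

Lemma sp_inv_mul : qmx_eq (qmxmul (sp_inv g) g) (qmx1 R).
Proof.
move=> l k.
have -> : qmxmul (sp_inv g) g l k =
    qscale (eps21 l) (qmxmul (qmx_adj g) (qmxmul (qI21 R) g) l k).
  rewrite !qmxmulE /qsum3 !qmxmulE /qsum3 /sp_inv /qmx_adj /qI21 /eps21 /=.
  by quat_ring.
rewrite g_sp /qI21 /qmx1 /eps21.
by case: (ord3E l) => ->; case: (ord3E k) => -> /=; quat_ring.
Qed.

Lemma mul_sp_inv : qmx_eq (qmxmul g (sp_inv g)) (qmx1 R).
Proof. exact: qmx_mul1C sp_inv_mul. Qed.

Lemma conj_SU21_in_conj_set (M : 'M[R[i]]_3) :
  SU21 M ->
  qconj_set g (@SU21_in_Sp21 R) (qmxmul g (qmxmul (qmat_of_cmx M) (sp_inv g))).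
Proof.
move=> SU21M; exists (qmat_of_cmx M), (sp_inv g).
by split; [exists M | split; [exact: mul_sp_inv | split; [exact: sp_inv_mul |]]].
Qed.

End SpInverse.
Arguments eps21 {R} k.

Section TraceCoefficients.
Variable R : realType.
Local Notation qmat := (qmat R).

Definition qtr (A : qmat) : qmat := fun i j => A j i.
Definition qmx_mul_i (A : qmat) : qmat := fun i j => qmul (A i j) qunit_i.

Definition trace_coef_re (A B : qmat) : qmat := qmxmul (qtr A) (qtr B).
Definition trace_coef_im (A B : qmat) : qmat := qmxmul (qtr (qmx_mul_i A)) (qtr B).

Lemma qtrace_mul_cmx (A B : qmat) (M : 'M[R[i]]_3) :
  qtrace (qmxmul A (qmxmul (qmat_of_cmx M) B)) =
  qsum3 (fun k => qsum3 (fun l =>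
    qadd (qscale (complex.Re (M k l)) (trace_coef_re A B k l))
         (qscale (complex.Im (M k l)) (trace_coef_im A B k l)))).
Proof.
rewrite qtraceE /qsum3 /trace_coef_re /trace_coef_im !qmxmulE /qsum3 !qmxmulE /qsum3.
by rewrite /qtr /qmx_mul_i /qmat_of_cmx /quat_of_complex; quat_ring.
Qed.

Lemma qre_trace_coef_re (A B : qmat) k l :
  qre (trace_coef_re A B k l) = qre (qmxmul B A l k).
Proof.
by rewrite /trace_coef_re !qmxmulE /qsum3 /qtr; cbn [qre qi qj qk qadd qmul]; ring.
Qed.

Lemma qre_trace_coef_im (A B : qmat) k l :
  qre (trace_coef_im A B k l) = - qi (qmxmul B A l k).
Proof.
rewrite /trace_coef_im !qmxmulE /qsum3 /qtr /qmx_mul_i.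
by cbn [qre qi qj qk qadd qmul qunit_i]; ring.
Qed.

Lemma trace_coef_re_sp_sym (g : qmat) k l :
  trace_coef_re g (sp_inv g) l k =
  qscale (eps21 k * eps21 l) (qconj (trace_coef_re g (sp_inv g) k l)).
Proof.
rewrite /trace_coef_re !qmxmulE /qsum3 /qtr /sp_inv /eps21.
by case: (ord3E l) => -> /=; quat_ring.
Qed.

Lemma trace_coef_im_sp_sym (g : qmat) k l :
  trace_coef_im g (sp_inv g) l k =
  qscale (- (eps21 k * eps21 l)) (qconj (trace_coef_im g (sp_inv g) k l)).
Proof.
rewrite /trace_coef_im !qmxmulE /qsum3 /qtr /qmx_mul_i /sp_inv /eps21.
by case: (ord3E l) => -> /=; quat_ring.
Qed.

End TraceCoefficients.

Lemma sum_ord3 (V : zmodType) (F : 'I_3 -> V) :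
  \sum_(k < 3) F k = F o0 + F o1 + F o2.
Proof.
by rewrite !big_ord_recr big_ord0 /= add0r; congr (F _ + F _ + F _); exact: val_inj.
Qed.

Lemma det_mx3 (K : comNzRingType) (a : nat -> nat -> K) :
  \det (\matrix_(i < 3, j < 3) a i j) =
    a 0 0 * (a 1 1 * a 2 2 - a 1 2 * a 2 1)
  - a 0 1 * (a 1 0 * a 2 2 - a 1 2 * a 2 0)
  + a 0 2 * (a 1 0 * a 2 1 - a 1 1 * a 2 0).
Proof.
rewrite (expand_det_row _ ord0) sum_ord3 /cofactor !(expand_det_row _ ord0).
by rewrite !big_ord_recr !big_ord0 /cofactor !det_mx11 !mxE /=; ring.
Qed.

Section Witnesses.
Variable R : realType.
Local Notation C := R[i].

Definition cmx3 (rows : seq (seq C)) : 'M[C]_3 :=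
  \matrix_(i < 3, j < 3) nth 0 (nth [::] rows i) j.

Lemma SU21_cmx3 (rows : seq (seq C)) (a := fun i j => nth 0 (nth [::] rows i) j) :
  a 0 0 * (a 1 1 * a 2 2 - a 1 2 * a 2 1) - a 0 1 * (a 1 0 * a 2 2 - a 1 2 * a 2 0)
    + a 0 2 * (a 1 0 * a 2 1 - a 1 1 * a 2 0) = 1 ->
  (forall i j, (i < 3)%N -> (j < 3)%N ->
     (a 0 i)^* * a 0 j + (a 1 i)^* * a 1 j - (a 2 i)^* * a 2 j
     = (if i == 2 then -1 else 1) *+ (i == j)) ->
  SU21 (cmx3 rows).
Proof.
move=> detM hM; split; first by rewrite /cmx3 (det_mx3 a).
apply/matrixP => i j; rewrite !mxE sum_ord3 !mxE !sum_ord3 !mxE /=.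
rewrite -(hM i j (ltn_ord i) (ltn_ord j)).
by rewrite !mulr0n !mulr1n !mulr0 !mulr1 !addr0 !add0r mulrN1 mulNr.
Qed.

Ltac SU21_by_computation :=
  apply: SU21_cmx3; [rewrite /= | move=> [|[|[|?]]] [|[|[|?]]] //= _ _];
  apply/eqP; rewrite eq_complex /=; apply/andP; split; apply/eqP; field.

Lemma SU21_rot01 : SU21 (cmx3 [:: [:: 0; -1; 0]; [:: 1; 0; 0]; [:: 0; 0; 1]]).
Proof. by SU21_by_computation. Qed.

Lemma SU21_irot01 :
  SU21 (cmx3 [:: [:: 0; Complex 0 1; 0]; [:: Complex 0 1; 0; 0]; [:: 0; 0; 1]]).
Proof. by SU21_by_computation. Qed.

Lemma SU21_idiag1 :
  SU21 (cmx3 [:: [:: Complex 0 1; 0; 0]; [:: 0; Complex 0 (-1); 0]; [:: 0; 0; 1]]).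
Proof. by SU21_by_computation. Qed.

Lemma SU21_idiag2 :
  SU21 (cmx3 [:: [:: Complex 0 1; 0; 0]; [:: 0; Complex 0 1; 0]; [:: 0; 0; -1]]).
Proof. by SU21_by_computation. Qed.

Lemma SU21_boost02 :
  SU21 (cmx3 [:: [:: Complex (5/4) 0; 0; Complex (3/4) 0]; [:: 0; 1; 0];
                 [:: Complex (3/4) 0; 0; Complex (5/4) 0]]).
Proof. by SU21_by_computation. Qed.

Lemma SU21_iboost02 :
  SU21 (cmx3 [:: [:: Complex (5/4) 0; 0; Complex 0 (3/4)]; [:: 0; 1; 0];
                 [:: Complex 0 (-(3/4)); 0; Complex (5/4) 0]]).
Proof. by SU21_by_computation. Qed.

Lemma SU21_boost12 :
  SU21 (cmx3 [:: [:: 1; 0; 0]; [:: 0; Complex (5/4) 0; Complex (3/4) 0];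
                 [:: 0; Complex (3/4) 0; Complex (5/4) 0]]).
Proof. by SU21_by_computation. Qed.

End Witnesses.

Arguments trace_coef_re : simpl never.
Arguments trace_coef_im : simpl never.

Section RealTraces.
Variable R : realType.
Variable g : qmat R.
Hypothesis g_sp : qmx_eq (qmxmul (qmx_adj g) (qmxmul (qI21 R) g)) (qI21 R).
Hypothesis real_traces : forall M, SU21 M ->
  qreal (qtrace (qmxmul g (qmxmul (qmat_of_cmx M) (sp_inv g)))).

Local Notation S := (trace_coef_re g (sp_inv g)).
Local Notation T := (trace_coef_im g (sp_inv g)).

Lemma real_trace_coefs M : SU21 M ->
  qreal (qsum3 (fun k => qsum3 (fun l =>
    qadd (qscale (complex.Re (M k l)) (S k l)) (qscale (complex.Im (M k l)) (T k l))))).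
Proof. by move/real_traces; rewrite qtrace_mul_cmx. Qed.

Lemma qre_trace_coef_re_offdiag k l : k != l -> qre (S k l) = 0.
Proof. by rewrite qre_trace_coef_re sp_inv_mul // /qmx1 eq_sym => /negbTE->. Qed.

Lemma qre_trace_coef_im_sp k l : qre (T k l) = 0.
Proof. by rewrite qre_trace_coef_im sp_inv_mul // /qmx1; case: eqP; rewrite /= oppr0. Qed.

Lemma trace_coef_re_diag k : S k k = qone R.
Proof.
have [_ e1 e2 e3] := quat_eqE (trace_coef_re_sp_sym g k k).
have r : qre (S k k) = 1 by rewrite qre_trace_coef_re sp_inv_mul // /qmx1 eqxx.
move: e1 e2 e3; cbn [qre qi qj qk qscale qconj]; rewrite eps21_sq => e1 e2 e3.
apply: quatP; cbn [qre qi qj qk qone]; lra.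
Qed.

Ltac real_trace_at SU21M :=
  have := real_trace_coefs SU21M;
  rewrite /qreal /qsum3 /cmx3 !mxE /= !trace_coef_re_diag;
  cbn [qi qj qk qadd qscale qone].

Ltac sym_components sym_kl :=
  have [_] := quat_eqE sym_kl; cbn [qre qi qj qk qscale qconj]; rewrite /eps21 /=.

(* For the rotation of [SU21_rot01] the trace is
   [S 1 0 - S 0 1 + S 2 2 = conj (S 0 1) - S 0 1 + 1];
   the other witnesses below work in the same way. *)
Lemma trace_coef_re01 : S o0 o1 = qzero R.
Proof.
real_trace_at (SU21_rot01 R) => -[e1 [e2 e3]].
sym_components (trace_coef_re_sp_sym g o0 o1) => s1 s2 s3.
have r := @qre_trace_coef_re_offdiag o0 o1 isT.
apply: quatP; cbn [qre qi qj qk qzero]; lra.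
Qed.

Lemma trace_coef_re02 : S o0 o2 = qzero R.
Proof.
real_trace_at (SU21_boost02 R) => -[e1 [e2 e3]].
sym_components (trace_coef_re_sp_sym g o0 o2) => s1 s2 s3.
have r := @qre_trace_coef_re_offdiag o0 o2 isT.
apply: quatP; cbn [qre qi qj qk qzero]; lra.
Qed.

Lemma trace_coef_re12 : S o1 o2 = qzero R.
Proof.
real_trace_at (SU21_boost12 R) => -[e1 [e2 e3]].
sym_components (trace_coef_re_sp_sym g o1 o2) => s1 s2 s3.
have r := @qre_trace_coef_re_offdiag o1 o2 isT.
apply: quatP; cbn [qre qi qj qk qzero]; lra.
Qed.

Lemma trace_coef_im00 : T o0 o0 = qzero R.
Proof.
real_trace_at (SU21_idiag1 R) => -[e1 [e2 e3]].
real_trace_at (SU21_idiag2 R) => -[f1 [f2 f3]].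
have r := qre_trace_coef_im_sp o0 o0.
apply: quatP; cbn [qre qi qj qk qzero]; lra.
Qed.

Lemma trace_coef_im01 : T o0 o1 = qzero R.
Proof.
real_trace_at (SU21_irot01 R) => -[e1 [e2 e3]].
sym_components (trace_coef_im_sp_sym g o0 o1) => s1 s2 s3.
have r := qre_trace_coef_im_sp o0 o1.
apply: quatP; cbn [qre qi qj qk qzero]; lra.
Qed.

Lemma trace_coef_im02 : T o0 o2 = qzero R.
Proof.
real_trace_at (SU21_iboost02 R) => -[e1 [e2 e3]].
sym_components (trace_coef_im_sp_sym g o0 o2) => s1 s2 s3.
have r := qre_trace_coef_im_sp o0 o2.
apply: quatP; cbn [qre qi qj qk qzero]; lra.
Qed.

Lemma trace_coef_re_sym_eq0 k l : S k l = qzero R -> S l k = qzero R.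
Proof. by move=> Skl; rewrite trace_coef_re_sp_sym Skl; quat_ring. Qed.

Lemma trace_coef_re_eq1 : qmx_eq S (qmx1 R).
Proof.
have S10 := trace_coef_re_sym_eq0 trace_coef_re01.
have S20 := trace_coef_re_sym_eq0 trace_coef_re02.
have S21 := trace_coef_re_sym_eq0 trace_coef_re12.
move=> k l; rewrite /qmx1.
by case: (ord3E k) => ->; case: (ord3E l) => -> /=;
  rewrite ?trace_coef_re_diag ?trace_coef_re01 ?trace_coef_re02 ?trace_coef_re12
          ?S10 ?S20 ?S21.
Qed.

Lemma trace_coef_im_row0 l : T o0 l = qzero R.
Proof.
by case: (ord3E l) => ->;
  [exact: trace_coef_im00 | exact: trace_coef_im01 | exact: trace_coef_im02].
Qed.

Lemma sp_col0_eq0 m : g m o0 = qzero R.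
Proof.
pose v m := qmul (g m o0) qunit_i.
have vL0 : qvec_mulmx (qtr (sp_inv g)) v =1 (fun _ => qzero R).
  by move=> l; rewrite -(trace_coef_im_row0 l) /trace_coef_im qmxmulE.
apply: qmul_i_eq0; transitivity (qvec_mulmx (qtr g) (qvec_mulmx (qtr (sp_inv g)) v) m).
  rewrite qvec_mulmxA (qvec_mulmx_eq (qmx_mul1C trace_coef_re_eq1) (frefl v)).
  by rewrite qvec_mulmx1.
by rewrite (qvec_mulmx_eq (fun _ _ => erefl) vL0) /qvec_mulmx /qsum3; quat_ring.
Qed.

End RealTraces.

Theorem lemma4p7 (R : realType) (g : qmat R) :
  Sp21 g ->
  ~ (forall A : qmat R, qconj_set g (@SU21_in_Sp21 R) A -> qreal (qtrace A)).
Proof.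
move=> [_ g_sp] real_traces.
have col0 : forall m, g m o0 = qzero R.
  apply: (sp_col0_eq0 g_sp) => M SU21M.
  exact: real_traces (conj_SU21_in_conj_set g_sp SU21M).
have : qmxmul (sp_inv g) g o0 o0 = qzero R.
  by rewrite qmxmulE /qsum3 !col0; quat_ring.
by rewrite sp_inv_mul // /qmx1 /= => /(congr1 (@qre R)) /= /eqP; rewrite oner_eq0.
Qed.
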